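(* Let $k\in\{1,\dots,r\}$ and suppose $(\bm n;\bm m),(\bm n+\bm e_k;\bm m),(\bm n;\bm m+\bm e_k)\in\mathfrak C_{2r}$ are normal. Then $$\frac{L_k[\Phi_{\bm n;\bm m+\bm e_k}(w)w^{-n_k}]}{L_k[\Phi_{\bm n;\bm m}(w)w^{-n_k}]}=\frac{L_k[\Phi^*_{\bm n+\bm e_k;\bm m}(w)w^{m_k}]}{L_k[\Phi^*_{\bm n;\bm m}(w)w^{m_k}]}=1-\alpha_{\bm n;\bm m+\bm e_k}\beta_{\bm n+\bm e_k;\bm m}.$$ Furthermore, $\alpha_{\bm n;\bm m+\bm e_k}\beta_{\bm n+\bm e_k;\bm m}\ne1$ if and only if $(\bm n+\bm e_k;\bm m+\bm e_k)$ is normal.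
   Context: Fix $r\ge1$; $\bm e_j$ is the $j$-th standard unit vector of $\mathbb Z^r$; for $\bm v\in\mathbb Z^r$, $|\bm v|=v_1+\dots+v_r$ (signed). Let $c_{k,j}\in\mathbb C$ and $L_j$ the linear functional on complex Laurent polynomials with $L_j[w^{-k}]=c_{k,j}$ ($k\in\mathbb Z$, $1\le j\le r$). $\mathfrak C_{2r}=\{(\bm n;\bm m)\in\mathbb Z^r\times\mathbb Z^r:n_j+m_j\ge0\ \forall j\}$. For $(\bm n;\bm m)\in\mathfrak C_{2r}$, $\bm n\ne-\bm m$, $T_{\bm n;\bm m}$ is the square matrix of size $|\bm n|+|\bm m|$ with rows indexed by $(j,k)$, $1\le j\le r$, $-m_j\le k\le n_j-1$ (ordered by $j$, then increasing $k$), columns indexed by $i=-|\bm m|,\dots,|\bm n|-1$, entries $c_{k-i,j}$; $T_{\bm n;-\bm n}:=1$; normal means $\det T_{\bm n;\bm m}\ne0$. For normal $(\bm n;\bm m)$, $\bm n\ne-\bm m$: $\Phi_{\bm n;\bm m}$ is the unique Laurent polynomial in $\operatorname{span}\{z^k\}_{k=-|\bm m|}^{|\bm n|}$ with $z^{|\bm n|}$-coefficient $1$ and $L_j[\Phi_{\bm n;\bm m}(w)w^{-k}]=0$ for $-m_j\le k\le n_j-1$, all $j$; $\Phi^*_{\bm n;\bm m}$ is the unique one in that span with $z^{-|\bm m|}$-coefficient $1$ and $L_j[\Phi^*_{\bm n;\bm m}(w)w^{-k}]=0$ for $-m_j+1\le k\le n_j$; for $\bm n=-\bm m$, $\Phi=\Phi^*=1$.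 $\alpha_{\bm n;\bm m}$ := $z^{-|\bm m|}$-coefficient of $\Phi_{\bm n;\bm m}$; $\beta_{\bm n;\bm m}$ := $z^{|\bm n|}$-coefficient of $\Phi^*_{\bm n;\bm m}$. *)

From HB Require Import structures.
From mathcomp Require Import all_boot all_order all_algebra.
From mathcomp Require Import reals complex.
From Stdlib Require Import ClassicalEpsilon.
Set Implicit Arguments. Unset Strict Implicit. Unset Printing Implicit Defensive.
Import Order.TTheory GRing.Theory Num.Theory.
Local Open Scope ring_scope.

Section MOP.
Variables (F : fieldType) (r : nat).
(* c k j = c_{k,j} = L_j[w^{-k}] *)
Variable c : int -> 'I_r -> F.

Definition vabs (v : 'I_r -> int) : int := \sum_(j < r) v j.
Definition vshift (v : 'I_r -> int) (k : 'I_r) : 'I_r -> int :=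
  fun j => v j + (j == k)%:Z.
Definition inC2r (n m : 'I_r -> int) : Prop := forall j, 0 <= n j + m j.
Definition diag_idx (n m : 'I_r -> int) : bool := [forall j, n j + m j == 0].

(* number of rows of block j : n_j + m_j *)
Definition dsz (n m : 'I_r -> int) (j : 'I_r) : nat := absz (n j + m j).
Definition Tsize (n m : 'I_r -> int) : nat := (\sum_(j < r) dsz n m j)%N.
Definition Sbefore (n m : 'I_r -> int) (j : 'I_r) : nat :=
  (\sum_(l < r | (l < j)%N) dsz n m l)%N.

(* T_{n;m}: row t corresponds to (j, k) with k = -m_j + (t - Sbefore j),
   column col corresponds to i = -|m| + col; entry c_{k-i,j}. *)
Definition Tmat (n m : 'I_r -> int) : 'M[F]_(Tsize n m) :=
  \matrix_(t, col)
    \sum_(j < r | (Sbefore n m j <= t < Sbefore n m j + dsz n m j)%N)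
       c ((- m j + (t - Sbefore n m j)%N%:Z) - (- vabs m + col%:Z)) j.

Definition normal (n m : 'I_r -> int) : bool :=
  if diag_idx n m then true (* T_{n;-n} := 1 *) else \det (Tmat n m) != 0.

(* Laurent polynomials are represented by their coefficient functions
   int -> F.  P is in span{z^i}_{lo <= i <= hi}: *)
Definition supp_in (lo hi : int) (P : int -> F) : Prop :=
  forall i, (i < lo) || (hi < i) -> P i = 0.
(* For P supported in [lo,hi]:  Lw j lo hi P s = L_j[P(w) w^{-s}]
   = sum_i P_i L_j[w^{i-s}] = sum_i P_i c_{s-i,j}. *)
Definition Lw (j : 'I_r) (lo hi : int) (P : int -> F) (s : int) : F :=
  \sum_(t < (absz (hi - lo)).+1) P (lo + t%:Z) * c (s - (lo + t%:Z)) j.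

Definition is_Phi (n m : 'I_r -> int) (P : int -> F) : Prop :=
  [/\ supp_in (- vabs m) (vabs n) P, P (vabs n) = 1 &
      forall j (k : int), - m j <= k <= n j - 1 ->
        Lw j (- vabs m) (vabs n) P k = 0].
Definition is_Phistar (n m : 'I_r -> int) (P : int -> F) : Prop :=
  [/\ supp_in (- vabs m) (vabs n) P, P (- vabs m) = 1 &
      forall j (k : int), - m j + 1 <= k <= n j ->
        Lw j (- vabs m) (vabs n) P k = 0].

Definition monom (a : int) : int -> F := fun i => (i == a)%:R.
Definition zero_fun : int -> F := fun _ => 0.

Definition Phi (n m : 'I_r -> int) : int -> F :=
  if diag_idx n m then monom (vabs n)
  else epsilon (inhabits zero_fun) (is_Phi n m).
Definition Phistar (n m : 'I_r -> int) : int -> F :=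
  if diag_idx n m then monom (vabs n)
  else epsilon (inhabits zero_fun) (is_Phistar n m).

Definition alpha (n m : 'I_r -> int) : F := Phi n m (- vabs m).
Definition beta (n m : 'I_r -> int) : F := Phistar n m (vabs n).

End MOP.

(* Normality of (n;m) means that T_{n;m} is invertible: a Laurent polynomial in
   span{z^i}_{-|m| <= i < |n|} whose moments L_j[P(w) w^{-s}], -m_j <= s < n_j,
   all vanish is zero.  This yields Phi_{n;m}, and Phi*_{n;m} after shifting the
   exponents by one, and it determines a polynomial of the right span by its
   leading (or trailing) coefficient and its moments.  Comparing moments gives
     Phi_{n;m+e_k}  = (1 - alpha beta) Phi_{n;m}  + alpha z^{-1} Phi*_{n+e_k;m},
     Phi*_{n+e_k;m} = (1 - alpha beta) Phi*_{n;m} + beta z Phi_{n;m+e_k},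
   whose last terms are annihilated by L_k[. w^{-n_k}] and L_k[. w^{m_k}]
   respectively; this gives the two ratios.  The denominators do not vanish,
   for otherwise Phi_{n;m} (resp. Phi*_{n;m}) would satisfy the conditions of the
   normal index (n+e_k;m) (resp. (n;m+e_k)) with zero leading coefficient.
   Finally, every solution of the homogeneous conditions of (n+e_k;m+e_k) is a
   multiple of Phi_{n;m+e_k}, which is itself a solution exactly when its k-th
   moment (1 - alpha beta) L_k[Phi_{n;m} w^{-n_k}] vanishes. *)

From HB Require Import structures.
From mathcomp Require Import all_boot all_order all_algebra.
From mathcomp Require Import reals complex.
From mathcomp Require Import zify ring.
From Stdlib Require Import ClassicalEpsilon.
Set Implicit Arguments. Unset Strict Implicit. Unset Printing Implicit Defensive.
Import Order.TTheory GRing.Theory Num.Theory.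
Local Open Scope ring_scope.

Section LaurentFunctional.
Variables (F : fieldType) (r : nat) (c : int -> 'I_r -> F).
Implicit Types (P Q : int -> F) (j : 'I_r) (lo hi s : int).

Lemma eq_Lw j lo hi P Q s : P =1 Q -> Lw c j lo hi P s = Lw c j lo hi Q s.
Proof. by move=> PQ; apply: eq_bigr => t _; rewrite PQ. Qed.

Lemma Lw_lin j lo hi (a b : F) P Q s :
  Lw c j lo hi (fun i => a * P i + b * Q i) s =
  a * Lw c j lo hi P s + b * Lw c j lo hi Q s.
Proof. by rewrite /Lw !mulr_sumr -big_split; apply: eq_bigr => t _ /=; ring. Qed.

Lemma Lw_scale j lo hi (a : F) P s :
  Lw c j lo hi (fun i => a * P i) s = a * Lw c j lo hi P s.
Proof. by rewrite /Lw mulr_sumr; apply: eq_bigr => t _; rewrite mulrA. Qed.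

Lemma Lw_shift j lo hi (d : int) P s :
  Lw c j lo hi (fun i => P (i + d)) s = Lw c j (lo + d) (hi + d) P (s + d).
Proof.
rewrite /Lw (_ : hi + d - (lo + d) = hi - lo); last by ring.
by apply: eq_bigr => t _; congr (P _ * c _ j); ring.
Qed.

Lemma supp_in_top lo hi P : supp_in lo hi P -> P hi = 0 -> supp_in lo (hi - 1) P.
Proof.
move=> P0 Ptop i /orP[ilo | hii]; first by rewrite P0 ?ilo.
by have [->|ne] := eqVneq i hi; last by apply: P0; apply/orP; right; lia.
Qed.

Lemma supp_in_bot lo hi P : supp_in lo hi P -> P lo = 0 -> supp_in (lo + 1) hi P.
Proof.
move=> P0 Plo0 i /orP[ilo | hii]; last by rewrite P0 ?hii ?orbT.
by have [->|ne] := eqVneq i lo; last by apply: P0; apply/orP; left; lia.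
Qed.

Lemma supp_monom (a : int) : supp_in a a (monom F a).
Proof. by move=> i ia; rewrite /monom (_ : i == a = false) //; apply/negbTE; lia. Qed.

Lemma Lw_widen_r j lo hi P s : supp_in lo hi P -> lo <= hi ->
  Lw c j lo (hi + 1) P s = Lw c j lo hi P s.
Proof.
move=> P0 lohi; rewrite /Lw (_ : absz (hi + 1 - lo)%R = (absz (hi - lo)%R).+1); last lia.
rewrite big_ord_recr /= P0 ?mul0r ?addr0 //; apply/orP; right; lia.
Qed.

Lemma Lw_widen_l j lo hi P s : supp_in lo hi P -> lo <= hi ->
  Lw c j (lo - 1) hi P s = Lw c j lo hi P s.
Proof.
move=> P0 lohi.
rewrite /Lw (_ : absz (hi - (lo - 1))%R = (absz (hi - lo)%R).+1); last lia.
rewrite big_ord_recl /= addr0 P0 ?mul0r ?add0r; last by apply/orP; left; lia.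
by apply: eq_bigr => t _; rewrite (_ : lo - 1 + t.+1%:Z = lo + t%:Z) //; lia.
Qed.

Lemma Lw_widen j lo hi lo' hi' P s : supp_in lo hi P -> lo' <= lo -> hi <= hi' ->
  Lw c j lo' hi' P s = Lw c j lo hi P s.
Proof.
move=> P0 lo'lo hihi'; have [lohi | hilo] := lerP lo hi; last first.
  have {}P0 i : P i = 0 by apply: P0; case: (ltrP i lo) => //= ?; lia.
  by rewrite /Lw !big1 // => t _; rewrite P0 mul0r.
have widen_hi (b : nat) : Lw c j lo (hi + b%:Z) P s = Lw c j lo hi P s.
  elim: b => [|b IH]; first by rewrite addr0.
  rewrite (_ : hi + b.+1%:Z = hi + b%:Z + 1) ?Lw_widen_r //; try lia.
  by move=> i /orP[?|?]; apply: P0; apply/orP; [left | right]; lia.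
have widen_lo (a : nat) : Lw c j (lo - a%:Z) hi' P s = Lw c j lo hi' P s.
  elim: a => [|a IH]; first by rewrite subr0.
  rewrite (_ : lo - a.+1%:Z = lo - a%:Z - 1) ?Lw_widen_l //; try lia.
  by move=> i /orP[?|?]; apply: P0; apply/orP; [left | right]; lia.
rewrite (_ : lo' = lo - (absz (lo - lo')%R)%:Z); last by lia.
by rewrite widen_lo (_ : hi' = hi + (absz (hi' - hi)%R)%:Z) ?widen_hi //; lia.
Qed.

Lemma Lw_monom j lo hi (a : int) s : lo <= a <= hi ->
  Lw c j lo hi (monom F a) s = c (s - a) j.
Proof.
move=> /andP[loa ahi]; rewrite (Lw_widen _ _ (supp_monom (a := a))) //.
by rewrite /Lw subrr big_ord1 addr0 /monom eqxx mul1r.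
Qed.

Definition orth_Phi (n m : 'I_r -> int) P := forall j k,
  - m j <= k <= n j - 1 -> Lw c j (- vabs m) (vabs n) P k = 0.
Definition orth_Phistar (n m : 'I_r -> int) P := forall j k,
  - m j + 1 <= k <= n j -> Lw c j (- vabs m) (vabs n) P k = 0.

End LaurentFunctional.

Definition laurent_of (F : fieldType) (lo : int) (d : nat) (v : 'I_d -> F) : int -> F :=
  fun i => \sum_(t < d) v t * monom F (lo + t%:Z) i.

Lemma laurent_ofE (F : fieldType) (lo : int) d (v : 'I_d -> F) (t : 'I_d) :
  laurent_of lo v (lo + t%:Z) = v t.
Proof.
rewrite /laurent_of (bigD1 t) //= /monom eqxx mulr1 big1 ?addr0 // => u ut.
rewrite (_ : (_ == _) = false) ?mulr0 //; apply/negbTE; apply: contra ut => /eqP ?.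
by apply/eqP/val_inj => /=; lia.
Qed.

Lemma supp_laurent_of (F : fieldType) lo d (v : 'I_d -> F) :
  supp_in lo (lo + d%:Z - 1) (laurent_of lo v).
Proof.
move=> i iout; rewrite /laurent_of big1 // => t _.
by rewrite /monom (_ : (_ == _) = false) ?mulr0 //; apply/negbTE; have := ltn_ord t; lia.
Qed.

Lemma vabs_diag (r : nat) (n m : 'I_r -> int) : diag_idx n m -> vabs n = - vabs m.
Proof.
move=> /forallP diag; apply/eqP; rewrite -addr_eq0 /vabs -big_split big1 //.
by move=> j _; apply/eqP/diag.
Qed.

Lemma diag_empty_range (r : nat) (n m : 'I_r -> int) j k :
  diag_idx n m -> ~ (- m j <= k <= n j - 1).
Proof. by move=> /forallP /(_ j) /eqP; lia. Qed.

Lemma inj_unitmx (F : fieldType) (d : nat) (A : 'M[F]_d) :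
  (forall v : 'cV_d, A *m v = 0 -> v = 0) -> A \in unitmx.
Proof.
move=> Aker; rewrite -unitmx_tr -row_free_unit; apply: inj_row_free => u uA0.
apply: trmx_inj; rewrite trmx0; apply: Aker.
by rewrite -(trmxK A) -trmx_mul uA0 trmx0.
Qed.

Section MomentMatrix.
Variables (F : fieldType) (r : nat) (c : int -> 'I_r -> F) (n m : 'I_r -> int).
Hypothesis nm : inC2r n m.

Definition Trow (t : nat) (i : int) : F :=
  \sum_(j < r | (Sbefore n m j <= t < Sbefore n m j + dsz n m j)%N)
     c ((- m j + (t - Sbefore n m j)%N%:Z) - i) j.

Lemma Tmat_Trow t col : Tmat c n m t col = Trow t (- vabs m + col%:Z).
Proof. by rewrite mxE. Qed.

Lemma Sbefore_lt {j1 j2 : 'I_r} : (j1 < j2)%N ->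
  (Sbefore n m j1 + dsz n m j1 <= Sbefore n m j2)%N.
Proof.
move=> j12; rewrite /Sbefore [X in (_ <= X)%N](bigD1 j1) //= addnC leq_add2l.
rewrite [X in (X <= _)%N]big_mkcond [X in (_ <= X)%N]big_mkcond.
apply: leq_sum => l _; case: ifP => // lj1; rewrite ifT //.
by rewrite (ltn_trans lj1 j12) /=; apply: contraTneq lj1 => ->; rewrite ltnn.
Qed.

Lemma Sbefore_dsz_le (j : 'I_r) : (Sbefore n m j + dsz n m j <= Tsize n m)%N.
Proof.
rewrite /Tsize [X in (_ <= X)%N](bigD1 j) //= /Sbefore addnC leq_add2l.
rewrite [X in (X <= _)%N]big_mkcond [X in (_ <= X)%N]big_mkcond.
apply: leq_sum => l _; case: ifP => // lj; rewrite ifT //.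
by apply: contraTneq lj => ->; rewrite ltnn.
Qed.

Lemma Trow_block (j : 'I_r) (t : nat) :
  (Sbefore n m j <= t < Sbefore n m j + dsz n m j)%N ->
  Trow t =1 fun i => c ((- m j + (t - Sbefore n m j)%N%:Z) - i) j.
Proof.
move=> tj i; rewrite /Trow (big_pred1 j) // => l /=.
apply/idP/eqP => [tl|->//]; apply/val_inj => /=.
have [lj|jl|//] := ltngtP l j.
- have := Sbefore_lt lj; move: tl tj => /andP[_ ?] /andP[? _]; lia.
- have := Sbefore_lt jl; move: tl tj => /andP[? _] /andP[_ ?]; lia.
Qed.

Lemma dsz_int (j : 'I_r) : (dsz n m j)%:Z = n j + m j.
Proof. by have := nm j; rewrite /dsz; lia. Qed.

Lemma Tsize_int : (Tsize n m)%:Z = vabs n + vabs m.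
Proof.
rewrite /Tsize /vabs -big_split /= (big_morph Posz PoszD (erefl _)).
by apply: eq_bigr => j _; rewrite dsz_int.
Qed.

Lemma Trow_cases (t : nat) : Trow t =1 (fun=> 0) \/
  exists j s, - m j <= s <= n j - 1 /\ Trow t =1 fun i => c (s - i) j.
Proof.
have [j tj | notj] :=
  pickP (fun j : 'I_r => Sbefore n m j <= t < Sbefore n m j + dsz n m j)%N.
  right; exists j, (- m j + (t - Sbefore n m j)%N%:Z); split; last exact: Trow_block.
  by have := dsz_int j; move: tj => /andP[? ?]; lia.
by left=> i; rewrite /Trow big_pred0.
Qed.

Lemma Trow_moment (j : 'I_r) (s : int) : - m j <= s <= n j - 1 ->
  exists t : 'I_(Tsize n m), Trow t =1 fun i => c (s - i) j.
Proof.
move=> js; have dj := dsz_int j.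
have tlt : (Sbefore n m j + absz (s + m j)%R < Tsize n m)%N.
  by apply: leq_trans (Sbefore_dsz_le j); move: js => /andP[? ?]; lia.
exists (Ordinal tlt) => i /=.
rewrite (@Trow_block j); last by move: js => /andP[? ?]; lia.
by rewrite addKn; congr (c _ j); move: js => /andP[? ?]; lia.
Qed.

Lemma supp_laurent_of_Tsize (v : 'I_(Tsize n m) -> F) :
  supp_in (- vabs m) (vabs n - 1) (laurent_of (- vabs m) v).
Proof.
have := supp_laurent_of (lo := - vabs m) v.
by rewrite Tsize_int (_ : - vabs m + _ - 1 = vabs n - 1) //; ring.
Qed.

Lemma col_laurent_of (v : 'cV[F]_(Tsize n m)) :
  \col_t laurent_of (- vabs m) (fun u => v u ord0) (- vabs m + t%:Z) = v.
Proof. by apply/matrixP => t z; rewrite [z]ord1 mxE laurent_ofE. Qed.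

Lemma Tmat_mul_col X (t0 : 'I_(Tsize n m)) j s :
  supp_in (- vabs m) (vabs n - 1) X -> Trow t0 =1 (fun i => c (s - i) j) ->
  (Tmat c n m *m \col_t X (- vabs m + t%:Z)) t0 ord0 = Lw c j (- vabs m) (vabs n) X s.
Proof.
move=> X0 t0js; have T := Tsize_int.
rewrite /Lw mxE (_ : absz (vabs n - - vabs m)%R = Tsize n m); last by lia.
rewrite big_ord_recr /= [X _]X0 ?mul0r ?addr0; last by apply/orP; right; lia.
by apply: eq_bigr => t _; rewrite Tmat_Trow t0js mxE mulrC.
Qed.

Lemma normalE : normal c n m = (Tmat c n m \in unitmx).
Proof.
rewrite /normal unitmxE unitfE; case: ifP => // diag.
have T0 : Tsize n m = 0%N by apply/eqP; rewrite -eqz_nat Tsize_int (vabs_diag diag) addNr.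
by move: (Tmat c n m); rewrite T0 => A; rewrite det_mx00 oner_neq0.
Qed.

Lemma normal_orthP : normal c n m <->
  (forall X, supp_in (- vabs m) (vabs n - 1) X -> orth_Phi c n m X ->
     forall i, X i = 0).
Proof.
rewrite normalE; split=> [Tunit X X0 Xorth i | orth0].
  pose v : 'cV_(Tsize n m) := \col_t X (- vabs m + t%:Z).
  have Tv0 : Tmat c n m *m v = 0.
    apply/matrixP => t0 z; rewrite ord1 [RHS]mxE.
    have [row0 | [j [s [js t0js]]]] := Trow_cases t0.
      by rewrite mxE big1 // => t _; rewrite Tmat_Trow row0 mul0r.
    by rewrite (Tmat_mul_col X0 t0js) Xorth.
  have v0 : v = 0 by rewrite -(mulKmx Tunit v) Tv0 mulmx0.
  have [iin | iout] := boolP ((- vabs m <= i) && (i <= vabs n - 1)); last first.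
    by apply: X0; move: iout; rewrite negb_and -!ltNge.
  have T := Tsize_int; have ilt : (absz (i + vabs m)%R < Tsize n m)%N by lia.
  have := congr1 (fun M : 'cV_ _ => M (Ordinal ilt) ord0) v0.
  by rewrite !mxE /= (_ : - vabs m + _ = i) //; lia.
apply: inj_unitmx => v Tv0.
have X0 := supp_laurent_of_Tsize (fun u => v u ord0).
rewrite -[v]col_laurent_of; apply/matrixP => t z; rewrite !mxE.
apply: orth0 => // j s js.
have [t0 t0js] := Trow_moment js.
by rewrite -(Tmat_mul_col X0 t0js) col_laurent_of Tv0 mxE.
Qed.

Lemma orth_Phi_solvable b : normal c n m -> exists X,
  supp_in (- vabs m) (vabs n - 1) X /\
  forall j s, - m j <= s <= n j - 1 -> Lw c j (- vabs m) (vabs n) X s = c (s - b) j.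
Proof.
rewrite normalE => Tunit.
pose v := invmx (Tmat c n m) *m \col_t Trow t b.
have X0 := supp_laurent_of_Tsize (fun u => v u ord0).
exists (laurent_of (- vabs m) (fun t => v t ord0)); split=> // j s js.
have [t0 t0js] := Trow_moment js.
by rewrite -(Tmat_mul_col X0 t0js) -t0js col_laurent_of mulKVmx // mxE.
Qed.

End MomentMatrix.

Section PhiSpaces.
Variables (F : fieldType) (r : nat) (c : int -> 'I_r -> F) (n m : 'I_r -> int).
Hypotheses (nm : inC2r n m) (Nnm : normal c n m).

Lemma orth_Phi_eq0 X : supp_in (- vabs m) (vabs n) X -> X (vabs n) = 0 ->
  orth_Phi c n m X -> forall i, X i = 0.
Proof. by move=> X0 Xtop; apply: (normal_orthP c nm).1 Nnm X (supp_in_top X0 Xtop). Qed.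

Lemma orth_Phistar_eq0 X : supp_in (- vabs m) (vabs n) X -> X (- vabs m) = 0 ->
  orth_Phistar c n m X -> forall i, X i = 0.
Proof.
move=> X0 Xbot Xorth i; rewrite -(subrK 1 i).
have X1 := supp_in_bot X0 Xbot.
apply: (normal_orthP c nm).1 Nnm (fun k => X (k + 1)) _ _ (i - 1) => [k kout | j s js].
  have [-> // | ne] := eqVneq (k + 1) (- vabs m).
  by apply: X0; move: kout => /orP[?|?]; apply/orP; [left | right]; lia.
rewrite Lw_shift (Lw_widen _ _ _ X1) //; try lia.
by rewrite -(Lw_widen _ _ _ X1 (lo' := - vabs m) (hi' := vabs n)) ?Xorth //; lia.
Qed.

Lemma Phi_spec : is_Phi c n m (Phi c n m).
Proof.
rewrite /Phi; case: ifP => [diag | _].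
  split=> [||j k jk]; last by exfalso; apply: diag_empty_range diag jk.
    by rewrite -[X in supp_in X](vabs_diag diag); apply: supp_monom.
  by rewrite /monom eqxx.
have [X [X0 Xmom]] := orth_Phi_solvable nm (vabs n) Nnm.
have T := Tsize_int nm.
apply: epsilon_spec; exists (fun i => 1 * monom F (vabs n) i + (-1) * X i); split.
- move=> i iout; rewrite X0 ?(supp_monom F) ?mulr0 ?addr0 //; lia.
- by rewrite /monom /= eqxx mul1r X0 ?mulr0 ?addr0 //; lia.
- move=> j s js; rewrite Lw_lin Lw_monom ?Xmom //; first ring.
  by have := nm j; lia.
Qed.

Lemma Phistar_spec : is_Phistar c n m (Phistar c n m).
Proof.
rewrite /Phistar; case: ifP => [diag | _].
  split=> [||j k jk]; first by rewrite -[X in supp_in X](vabs_diag diag); apply: supp_monom.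
    by rewrite /monom -(vabs_diag diag) eqxx.
  by exfalso; apply: (diag_empty_range (j := j) (k := k - 1) diag); lia.
have [X [X0 Xmom]] := orth_Phi_solvable nm (- vabs m - 1) Nnm.
have T := Tsize_int nm.
apply: epsilon_spec; exists (fun i => 1 * monom F (- vabs m) i + (-1) * X (i - 1)); split.
- move=> i iout; rewrite X0 ?(supp_monom F) ?mulr0 ?addr0 //; lia.
- by rewrite /monom /= eqxx mul1r X0 ?mulr0 ?addr0 //; lia.
- move=> j s js; rewrite Lw_lin Lw_monom; last lia.
  rewrite Lw_shift (Lw_widen _ _ _ X0); try lia.
  rewrite -(Lw_widen _ _ _ X0 (lo' := - vabs m) (hi' := vabs n)); try lia.
  rewrite Xmom; last lia.
  by rewrite (_ : s - 1 - _ = s - - vabs m); ring.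
Qed.

End PhiSpaces.

Lemma vabs_vshift (r : nat) (v : 'I_r -> int) (k : 'I_r) : vabs (vshift v k) = vabs v + 1.
Proof.
rewrite /vabs /vshift big_split /=; congr (_ + _).
by rewrite (bigD1 k) //= eqxx big1 ?addr0 // => j /negbTE ->.
Qed.

Lemma vshift_bounds (r : nat) (v : 'I_r -> int) (k j : 'I_r) :
  v j <= vshift v k j <= v j + 1.
Proof. by rewrite /vshift; case: (j == k); lia. Qed.

Lemma vshift_at (r : nat) (v : 'I_r -> int) (k : 'I_r) : vshift v k k = v k + 1.
Proof. by rewrite /vshift eqxx. Qed.

Section NeighbourRelations.
Variables (F : fieldType) (r : nat) (c : int -> 'I_r -> F) (n m : 'I_r -> int) (k : 'I_r).
Hypotheses (nm : inC2r n m) (n1m : inC2r (vshift n k) m) (nm1 : inC2r n (vshift m k)).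
Hypotheses (Nnm : normal c n m) (Nn1m : normal c (vshift n k) m).
Hypothesis Nnm1 : normal c n (vshift m k).

Let vm : vabs (vshift m k) = vabs m + 1 := vabs_vshift m k.
Let vn : vabs (vshift n k) = vabs n + 1 := vabs_vshift n k.
Let mk : vshift m k k = m k + 1 := vshift_at m k.
Let nk : vshift n k k = n k + 1 := vshift_at n k.
Let nmk : 0 <= n k + m k := nm k.

Local Notation Pnm := (Phi c n m).
Local Notation Snm := (Phistar c n m).
Local Notation Pnm1 := (Phi c n (vshift m k)).
Local Notation Sn1m := (Phistar c (vshift n k) m).
Local Notation al := (alpha c n (vshift m k)).
Local Notation be := (beta c (vshift n k) m).

Lemma Phi_vshift_m i : Pnm1 i = (1 - al * be) * Pnm i + al * Sn1m (i + 1).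
Proof.
have [P1s P1top P1orth] := Phi_spec nm1 Nnm1.
have [S1s S1bot S1orth] := Phistar_spec n1m Nn1m.
have [Ps Ptop Porth] := Phi_spec nm Nnm.
pose D i := 1 * Pnm1 i + (-1) * ((1 - al * be) * Pnm i + al * Sn1m (i + 1)).
have Ds : supp_in (- vabs m) (vabs n) D.
  move=> l lout; rewrite /D; have [->|ne] := eqVneq l (- vabs m - 1).
    rewrite Ps; last lia.
    rewrite (_ : - vabs m - 1 + 1 = - vabs m); last ring.
    by rewrite S1bot /alpha vm (_ : - (vabs m + 1) = - vabs m - 1); ring.
  by rewrite P1s ?Ps ?S1s; try ring; lia.
suff D0 : D i = 0 by apply/eqP; rewrite -subr_eq0; apply/eqP; rewrite -D0 /D; ring.
apply: (orth_Phi_eq0 nm Nnm Ds) => [|j s js].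
  by rewrite /D P1top Ptop /beta vn; ring.
have mj := vshift_bounds m k j; have nj := vshift_bounds n k j.
rewrite -(Lw_widen _ _ _ Ds (lo' := - vabs (vshift m k)) (hi' := vabs n)); try lia.
rewrite /D !Lw_lin (Lw_widen _ _ _ Ps) ?Porth; try lia.
rewrite P1orth ?Lw_shift ?(Lw_widen _ _ _ S1s) ?S1orth; try ring; lia.
Qed.

Lemma Phistar_vshift_n i : Sn1m i = (1 - al * be) * Snm i + be * Pnm1 (i - 1).
Proof.
have [P1s P1top P1orth] := Phi_spec nm1 Nnm1.
have [S1s S1bot S1orth] := Phistar_spec n1m Nn1m.
have [Ss Sbot Sorth] := Phistar_spec nm Nnm.
pose D i := 1 * Sn1m i + (-1) * ((1 - al * be) * Snm i + be * Pnm1 (i - 1)).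
have Ds : supp_in (- vabs m) (vabs n) D.
  move=> l lout; rewrite /D; have [->|ne] := eqVneq l (vabs n + 1).
    rewrite Ss; last lia.
    rewrite (_ : vabs n + 1 - 1 = vabs n); last ring.
    by rewrite P1top /beta vn; ring.
  by rewrite S1s ?Ss ?P1s; try ring; lia.
suff D0 : D i = 0 by apply/eqP; rewrite -subr_eq0; apply/eqP; rewrite -D0 /D; ring.
apply: (orth_Phistar_eq0 nm Nnm Ds) => [|j s js].
  rewrite /D S1bot Sbot /alpha vm (_ : - vabs m - 1 = - (vabs m + 1)); ring.
have mj := vshift_bounds m k j; have nj := vshift_bounds n k j.
rewrite -(Lw_widen _ _ _ Ds (lo' := - vabs m) (hi' := vabs (vshift n k))); try lia.
rewrite /D !Lw_lin (Lw_widen _ _ _ Ss) ?Sorth; try lia.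
rewrite S1orth ?Lw_shift ?(Lw_widen _ _ _ P1s) ?P1orth; try ring; lia.
Qed.

Lemma Lw_Phi_vshift_m :
  Lw c k (- vabs (vshift m k)) (vabs n) Pnm1 (n k) =
  (1 - al * be) * Lw c k (- vabs m) (vabs n) Pnm (n k).
Proof.
have [S1s _ S1orth] := Phistar_spec n1m Nn1m.
have [Ps _ _] := Phi_spec nm Nnm.
rewrite (eq_Lw _ _ _ _ _ Phi_vshift_m) Lw_lin (Lw_widen _ _ _ Ps); try lia.
by rewrite Lw_shift (Lw_widen _ _ _ S1s) ?S1orth; try ring; lia.
Qed.

Lemma Lw_Phistar_vshift_n :
  Lw c k (- vabs m) (vabs (vshift n k)) Sn1m (- m k) =
  (1 - al * be) * Lw c k (- vabs m) (vabs n) Snm (- m k).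
Proof.
have [P1s _ P1orth] := Phi_spec nm1 Nnm1.
have [Ss _ _] := Phistar_spec nm Nnm.
rewrite (eq_Lw _ _ _ _ _ Phistar_vshift_n) Lw_lin (Lw_widen _ _ _ Ss); try lia.
by rewrite Lw_shift (Lw_widen _ _ _ P1s) ?P1orth; try ring; lia.
Qed.

Lemma Lw_Phi_neq0 : Lw c k (- vabs m) (vabs n) Pnm (n k) != 0.
Proof.
have [Ps Ptop Porth] := Phi_spec nm Nnm.
apply/eqP => L0; suff : Pnm (vabs n) = 0 by rewrite Ptop => /eqP; rewrite oner_eq0.
apply: (orth_Phi_eq0 n1m Nn1m) => [l lout | | j s js]; rewrite ?Ps //; try lia.
rewrite (Lw_widen _ _ _ Ps); try lia.
case: (eqVneq j k) js => [-> | jk] js; last first.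
  by apply: Porth; move: js; rewrite /vshift (negbTE jk); lia.
by have [-> // | snk] := eqVneq s (n k); apply: Porth; move: js; lia.
Qed.

Lemma Lw_Phistar_neq0 : Lw c k (- vabs m) (vabs n) Snm (- m k) != 0.
Proof.
have [Ss Sbot Sorth] := Phistar_spec nm Nnm.
apply/eqP => L0; suff : Snm (- vabs m) = 0 by rewrite Sbot => /eqP; rewrite oner_eq0.
apply: (orth_Phistar_eq0 nm1 Nnm1) => [l lout | | j s js]; rewrite ?Ss //; try lia.
rewrite (Lw_widen _ _ _ Ss); try lia.
case: (eqVneq j k) js => [-> | jk] js; last first.
  by apply: Sorth; move: js; rewrite /vshift (negbTE jk); lia.
by have [-> // | smk] := eqVneq s (- m k); apply: Sorth; move: js; lia.
Qed.

Lemma orth_vshift_nm X :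
  supp_in (- vabs (vshift m k)) (vabs (vshift n k) - 1) X ->
  orth_Phi c (vshift n k) (vshift m k) X -> forall i, X i = X (vabs n) * Pnm1 i.
Proof.
have [P1s P1top P1orth] := Phi_spec nm1 Nnm1.
move=> Xs Xorth i.
suff : 1 * X i + (- X (vabs n)) * Pnm1 i = 0 by move/eqP; rewrite mul1r mulNr subr_eq0 => /eqP.
apply: (orth_Phi_eq0 nm1 Nnm1 (X := fun i => 1 * X i + (- X (vabs n)) * Pnm1 i)).
- by move=> l lout; rewrite Xs ?P1s ?mulr0 ?addr0 //; lia.
- by rewrite P1top; ring.
move=> j s js; have mj := vshift_bounds m k j; have nj := vshift_bounds n k j.
rewrite Lw_lin P1orth // (Lw_widen _ _ _ Xs (lo' := - vabs (vshift m k))); try lia.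
by rewrite -(Lw_widen _ _ _ Xs (lo' := - vabs (vshift m k)) (hi' := vabs (vshift n k))) ?Xorth;
  try ring; lia.
Qed.

Lemma normal_vshift_nm : al * be != 1 <-> normal c (vshift n k) (vshift m k).
Proof.
have n1m1 : inC2r (vshift n k) (vshift m k).
  by move=> j; have := nm j; have := vshift_bounds n k j; have := vshift_bounds m k j; lia.
have [P1s P1top P1orth] := Phi_spec nm1 Nnm1.
split=> [ab1 | Nn1m1].
  apply/(normal_orthP c n1m1) => X Xs Xorth.
  suff X0 : X (vabs n) = 0 by move=> i; rewrite (orth_vshift_nm Xs Xorth) X0 mul0r.
  have kk : - vshift m k k <= n k <= vshift n k k - 1 by lia.
  have /eqP := Xorth k (n k) kk.
  rewrite (eq_Lw _ _ _ _ _ (orth_vshift_nm Xs Xorth)) Lw_scale.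
  rewrite (Lw_widen _ _ _ P1s) ?Lw_Phi_vshift_m; try lia.
  rewrite !mulf_eq0 subr_eq0 [1 == _]eq_sym (negbTE ab1) (negbTE Lw_Phi_neq0) !orbF.
  by move/eqP.
apply/eqP => ab1; suff : Pnm1 (vabs n) = 0 by rewrite P1top => /eqP; rewrite oner_eq0.
apply: (orth_Phi_eq0 n1m1 Nn1m1) => [l lout | | j s js]; rewrite ?P1s //; try lia.
rewrite (Lw_widen _ _ _ P1s); try lia.
case: (eqVneq j k) js => [-> | jk] js; last first.
  by apply: P1orth; move: js; rewrite /vshift (negbTE jk); lia.
have [-> | snk] := eqVneq s (n k); first by rewrite Lw_Phi_vshift_m ab1 subrr mul0r.
by apply: P1orth; move: js; lia.
Qed.

End NeighbourRelations.

Theorem corollary7p2 (R : realType) (r : nat) (hr : (0 < r)%N)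
  (c : int -> 'I_r -> R[i]) (n m : 'I_r -> int) (k : 'I_r) :
  inC2r n m -> inC2r (vshift n k) m -> inC2r n (vshift m k) ->
  normal c n m -> normal c (vshift n k) m -> normal c n (vshift m k) ->
  let ab := alpha c n (vshift m k) * beta c (vshift n k) m in
  [/\ Lw c k (- vabs m) (vabs n) (Phi c n m) (n k) != 0,
      Lw c k (- vabs (vshift m k)) (vabs n) (Phi c n (vshift m k)) (n k)
        / Lw c k (- vabs m) (vabs n) (Phi c n m) (n k) = 1 - ab,
      Lw c k (- vabs m) (vabs n) (Phistar c n m) (- m k) != 0,
      Lw c k (- vabs m) (vabs (vshift n k)) (Phistar c (vshift n k) m) (- m k)
        / Lw c k (- vabs m) (vabs n) (Phistar c n m) (- m k) = 1 - ab
    & (ab != 1 <-> normal c (vshift n k) (vshift m k))].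
Proof.
move=> nm n1m nm1 Nnm Nn1m Nnm1 ab.
have LP : Lw c k (- vabs m) (vabs n) (Phi c n m) (n k) != 0 by exact: Lw_Phi_neq0.
have LS : Lw c k (- vabs m) (vabs n) (Phistar c n m) (- m k) != 0.
  exact: Lw_Phistar_neq0.
split=> //.
- by rewrite Lw_Phi_vshift_m // mulfK.
- by rewrite Lw_Phistar_vshift_n // mulfK.
- exact: normal_vshift_nm.
Qed.
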